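(* Let $\alpha,\beta>0$ with $\beta>\alpha$, and let $S_0,I_0$ satisfy $S_0>I_0>0$, $S_0+I_0=1$ and $S_0>\alpha/\beta$. Let $(S(t),I(t),R(t))$ be the solution of $$\dot S=-\frac{\beta SI}{S+I},\qquad \dot I=\frac{\beta SI}{S+I}-\alpha I,\qquad \dot R=\alpha I$$ with $S(0)=S_0$, $I(0)=I_0$, $R(0)=0$. Then any two of the curves $S(t)$, $I(t)$, $R(t)$ (for $t>0$) intersect exactly once. Furthermore, letting $t_{\mathrm{peak}}>0$ denote the time at which $I(t)$ attains its maximum: (i) the curves $S(t)$ and $I(t)$ intersect before $t_{\mathrm{peak}}$ if $\beta>2\alpha$, exactly at $t_{\mathrm{peak}}$ if $\beta=2\alpha$, and after $t_{\mathrm{peak}}$ if $\beta<2\alpha$; (ii) the three curves $S(t)$, $I(t)$, $R(t)$ intersect in a common point if and only if $\frac{\beta}{\alpha}<\frac{\log 3}{\log 3-\log 2}$ and $S_0=\frac13\left(\frac32\right)^{\beta/\alpha}$; (iii) the three curves intersect in a common point located at $t=t_{\mathrm{peak}}$ if and only if $\beta=2\alpha$ and $S_0=\frac34$.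
   Context: Modified SIR epidemiological model with recovery rate $\alpha$ and transmission rate $\beta$; $S,I,R$ are fractions of susceptible, infective and removed individuals, with total population $S+I+R=1$. *)

From Stdlib Require Import Reals.
From Coquelicot Require Import Coquelicot.
Open Scope R_scope.

Definition SIR_solution (alpha beta S0 I0 : R) (S I Rm : R -> R) : Prop :=
  S 0 = S0 /\ I 0 = I0 /\ Rm 0 = 0 /\
  filterlim S (at_right 0) (locally S0) /\
  filterlim I (at_right 0) (locally I0) /\
  filterlim Rm (at_right 0) (locally 0) /\
  (forall t, 0 < t ->
     is_derive S t (- (beta * S t * I t / (S t + I t))) /\
     is_derive I t (beta * S t * I t / (S t + I t) - alpha * I t) /\
     is_derive Rm t (alpha * I t)).

Definition is_peak_time (I : R -> R) (tp : R) : Prop :=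
  0 < tp /\ forall t, 0 <= t -> I t <= I tp.

Definition meet_exactly_once (f g : R -> R) : Prop :=
  exists t, (0 < t /\ f t = g t) /\ forall t', 0 < t' /\ f t' = g t' -> t' = t.

(* Put c = beta - alpha, k = beta / c and w(t) = S0 + I0 e^(ct).  As long as S and I
   stay positive, ln S - ln I + ct and ln S + k ln w are first integrals, whence
   S = S0 w^(-k), I = (w - S0) w^(-k) and, by conservation of S + I + R, R = 1 - w^(1-k);
   positivity itself propagates along (0, oo) because these formulas are positive.
   As w increases from 1 to oo, every claim becomes one about the functions
   v |-> (a v + b) v^(-k) on (1, oo), which increase up to v = k b / ((1 - k) a) and
   decrease afterwards: S = I at w = 2 S0, I peaks at w = beta S0 / alpha, S = R and
   I = R at the unique roots of (v + S0) v^(-k) = 1 and (2 v - S0) v^(-k) = 1, and a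
   common point needs w = 2 S0 and 3 S0 (2 S0)^(-k) = 1, i.e. S0 = (3/2)^(beta/alpha) / 3. *)

From Stdlib Require Import Reals Ranalysis5 Lra Classical.
From Coquelicot Require Import Coquelicot.
Open Scope R_scope.

Lemma is_derive_lt_of_pos (f df : R -> R) x y : x < y ->
  (forall t, x <= t <= y -> is_derive f t (df t)) ->
  (forall t, x < t < y -> 0 < df t) -> f x < f y.
Proof.
  intros Hxy Hd Hpos.
  destruct (MVT_cor2 f df x y Hxy) as [t [E Ht]].
  - intros t Ht. apply is_derive_Reals, Hd, Ht.
  - pose proof (Hpos t Ht). nra.
Qed.

Lemma is_derive_lt_of_neg (f df : R -> R) x y : x < y ->
  (forall t, x <= t <= y -> is_derive f t (df t)) ->
  (forall t, x < t < y -> df t < 0) -> f y < f x.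
Proof.
  intros Hxy Hd Hneg.
  enough (- f x < - f y) by lra.
  apply (is_derive_lt_of_pos (fun t => - f t) (fun t => - df t)); [exact Hxy| |].
  - intros t Ht. apply (is_derive_opp f), Hd, Ht.
  - intros t Ht. pose proof (Hneg t Ht). lra.
Qed.

Lemma is_derive_0_eq (f : R -> R) a b :
  (forall t, a < t < b -> is_derive f t 0) ->
  forall x y, a < x < b -> a < y < b -> f x = f y.
Proof.
  intros Hd x y Hx Hy.
  assert (Hxy : forall u v, a < u -> v < b -> u < v -> f u = f v).
  { intros u v Hu Hv Huv.
    destruct (MVT_cor2 f (fun _ => 0) u v Huv) as [t [E _]].
    - intros t Ht. apply is_derive_Reals, Hd. lra.
    - lra. }
  destruct (Rtotal_order x y) as [H | [H | H]].
  - apply Hxy; lra.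
  - congruence.
  - symmetry. apply Hxy; lra.
Qed.

Lemma is_derive_0_at_right_eq (f : R -> R) T L :
  (forall t, 0 < t < T -> is_derive f t 0) ->
  filterlim f (at_right 0) (locally L) ->
  forall t, 0 < t < T -> f t = L.
Proof.
  intros Hd Hlim t Ht.
  symmetry. apply (closed_filterlim_loc f (fun u => u = f t) L Hlim); [|apply closed_eq].
  assert (HT : 0 < T) by lra.
  exists (mkposreal T HT). intros s Hs Hs0.
  apply (is_derive_0_eq f 0 T Hd); [|exact Ht].
  change (Rabs (s - 0) < T) in Hs. apply Rabs_def2 in Hs. lra.
Qed.

Lemma is_derive_continuous (f : R -> R) x l : is_derive f x l -> continuous f x.
Proof.
  intros Hf. apply (ex_derive_continuous (K := R_AbsRing) (V := R_NormedModule)).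
  exists l. exact Hf.
Qed.

Lemma is_derive_eq_value (f : R -> R) x (l l' : R) :
  is_derive f x l -> l = l' -> is_derive f x l'.
Proof. intros Hf <-. exact Hf. Qed.

Lemma is_derive_Rplus (f g : R -> R) x a b : is_derive f x a -> is_derive g x b ->
  is_derive (fun t => f t + g t) x (a + b).
Proof. exact (is_derive_plus f g x a b). Qed.

Lemma is_derive_Rminus (f g : R -> R) x a b : is_derive f x a -> is_derive g x b ->
  is_derive (fun t => f t - g t) x (a - b).
Proof. exact (is_derive_minus f g x a b). Qed.

Lemma is_derive_linear c x : is_derive (fun t => c * t) x c.
Proof. auto_derive; [exact I | ring]. Qed.

Lemma is_derive_ln_comp (f : R -> R) x l : 0 < f x -> is_derive f x l ->
  is_derive (fun t => ln (f t)) x (l / f x).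
Proof.
  intros Hpos Hf. eapply is_derive_eq_value.
  - exact (is_derive_comp ln f x _ _ (is_derive_ln _ Hpos) Hf).
  - change (l * / f x = l / f x). reflexivity.
Qed.

Lemma filterlim_Rplus {T} {F} {FF : Filter F} (f g : T -> R) a b :
  filterlim f F (locally a) -> filterlim g F (locally b) ->
  filterlim (fun t => f t + g t) F (locally (a + b)).
Proof. intros Hf Hg. exact (filterlim_comp_2 f g Rplus Hf Hg (filterlim_plus a b)). Qed.

Lemma filterlim_Rminus {T} {F} {FF : Filter F} (f g : T -> R) a b :
  filterlim f F (locally a) -> filterlim g F (locally b) ->
  filterlim (fun t => f t - g t) F (locally (a - b)).
Proof.
  intros Hf Hg. apply (filterlim_Rplus f (fun t => - g t)); [exact Hf|].
  eapply filterlim_comp; [exact Hg | exact (filterlim_opp b)].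
Qed.

Lemma filterlim_ln {T} {F} {FF : Filter F} (f : T -> R) a : 0 < a ->
  filterlim f F (locally a) -> filterlim (fun t => ln (f t)) F (locally (ln a)).
Proof. intros Ha Hf. eapply filterlim_comp; [exact Hf | exact (continuous_ln a Ha)]. Qed.

Lemma continuous_at_right (f : R -> R) x :
  continuous f x -> filterlim f (at_right x) (locally (f x)).
Proof. apply filterlim_filter_le_1, filter_le_within. Qed.

Lemma continuous_at_left (f : R -> R) x :
  continuous f x -> filterlim f (at_left x) (locally (f x)).
Proof. apply filterlim_filter_le_1, filter_le_within. Qed.

Lemma continuous_eq_at_left (f g : R -> R) a x : a < x ->
  continuous f x -> continuous g x -> (forall t, a < t < x -> f t = g t) -> f x = g x.
Proof.
  intros Hax Hf Hg Hfg.
  apply (@filterlim_locally_unique _ _ _ (at_left x)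
           (Proper_StrongProper _ (at_left_proper_filter x)) f).
  - exact (continuous_at_left f x Hf).
  - apply (filterlim_ext_loc g f).
    + assert (Hd : 0 < x - a) by lra.
      exists (mkposreal _ Hd). intros t Ht Htx. symmetry. apply Hfg.
      change (Rabs (t - x) < x - a) in Ht. apply Rabs_def2 in Ht. lra.
    + exact (continuous_at_left g x Hg).
Qed.

Lemma filterlim_pos_eventually {T} (F : (T -> Prop) -> Prop) (f : T -> R) L :
  filterlim f F (locally L) -> 0 < L -> F (fun t => 0 < f t).
Proof. intros Hf HL. exact (Hf _ (open_gt 0 L HL)). Qed.

Lemma at_right_0_continuation (P : R -> Prop) :
  at_right 0 P ->
  (forall m, 0 < m -> (forall t, 0 < t < m -> P t) -> locally m P) ->
  forall t, 0 < t -> P t.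
Proof.
  intros [d Hd] Hstep t0 Ht0. apply NNPP. intro Hnot.
  set (E := fun m => 0 < m /\ forall t, 0 < t < m -> P t).
  assert (Ed : E d).
  { split; [apply cond_pos|]. intros t Ht. apply Hd; [|lra].
    change (Rabs (t - 0) < d). rewrite Rminus_0_r, Rabs_pos_eq; lra. }
  destruct (completeness E) as [M [HubM HleM]].
  - exists t0. intros m [Hm HPm]. apply Rnot_lt_le. intro Hlt. apply Hnot, HPm. lra.
  - exists d. exact Ed.
  - assert (HdM : d <= M) by (apply HubM, Ed).
    assert (HM : 0 < M) by (pose proof (cond_pos d); lra).
    assert (HPM : forall t, 0 < t < M -> P t).
    { intros t Ht. apply NNPP. intro HPt.
      assert (Hub : is_upper_bound E t).
      { intros m [Hm HPm]. apply Rnot_lt_le. intro Hlt. apply HPt, HPm. lra. }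
      pose proof (HleM t Hub). lra. }
    destruct (Hstep M HM HPM) as [e He].
    assert (EMe : E (M + e / 2)).
    { split; [pose proof (cond_pos e); lra|]. intros t Ht.
      destruct (Rlt_le_dec t M) as [HtM | HMt]; [apply HPM; lra|].
      apply He. change (Rabs (t - M) < e).
      pose proof (cond_pos e). rewrite Rabs_pos_eq; lra. }
    pose proof (HubM _ EMe). pose proof (cond_pos e). lra.
Qed.

(** * The functions v |-> (a v + b) v^(-k) *)

Lemma Rpower_pos x y : 0 < Rpower x y.
Proof. apply exp_pos. Qed.

Lemma Rpower_base_1 y : Rpower 1 y = 1.
Proof. unfold Rpower. rewrite ln_1, Rmult_0_r. apply exp_0. Qed.

Definition pow_affine (k a b v : R) : R := (a * v + b) * Rpower v (- k).

Lemma pow_affine_1 k a b : pow_affine k a b 1 = a + b.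
Proof. unfold pow_affine. rewrite Rpower_base_1. ring. Qed.

Lemma is_derive_pow_affine k a b v : 0 < v ->
  is_derive (pow_affine k a b) v (Rpower v (- k) / v * ((1 - k) * a * v - k * b)).
Proof.
  intros Hv. unfold pow_affine, Rpower.
  auto_derive; [exact Hv|]. field. lra.
Qed.

Section PowAffine.

Variables k a b : R.
Hypotheses (Hk : 1 < k) (Ha : 0 < a).

Local Notation phi := (pow_affine k a b).

Lemma pow_affine_increasing x y : 0 < x -> x < y ->
  0 <= (1 - k) * a * y - k * b -> phi x < phi y.
Proof.
  intros Hx Hxy Hy.
  apply (is_derive_lt_of_pos phi (fun t => Rpower t (- k) / t * ((1 - k) * a * t - k * b))
           x y Hxy).
  - intros t Ht. apply is_derive_pow_affine. lra.
  - intros t Ht. apply Rmult_lt_0_compat.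
    + apply Rdiv_lt_0_compat; [apply Rpower_pos | lra].
    + assert (0 < (k - 1) * a * (y - t)) by (apply Rmult_lt_0_compat; nra).
      nra.
Qed.

Lemma pow_affine_decreasing x y : 0 < x -> x < y ->
  (1 - k) * a * x - k * b <= 0 -> phi y < phi x.
Proof.
  intros Hx Hxy Hy.
  apply (is_derive_lt_of_neg phi (fun t => Rpower t (- k) / t * ((1 - k) * a * t - k * b))
           x y Hxy).
  - intros t Ht. apply is_derive_pow_affine. lra.
  - intros t Ht.
    assert (0 < Rpower t (- k) / t) by (apply Rdiv_lt_0_compat; [apply Rpower_pos | lra]).
    assert (0 < (k - 1) * a * (t - x)) by (apply Rmult_lt_0_compat; nra).
    nra.
Qed.

Lemma pow_affine_lt_max m v : 0 < m -> (1 - k) * a * m = k * b ->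
  0 < v -> v <> m -> phi v < phi m.
Proof.
  intros Hm Hcrit Hv Hvm.
  destruct (Rtotal_order v m) as [H | [H | H]]; [| contradiction |].
  - apply pow_affine_increasing; lra.
  - apply pow_affine_decreasing; lra.
Qed.

Lemma pow_affine_eq_1_unique u v : 1 < a + b -> 1 < u -> 1 < v ->
  phi u = 1 -> phi v = 1 -> u = v.
Proof.
  intros Hab.
  assert (Hroots : forall u v, 1 < u -> u < v -> phi u = 1 -> phi v = 1 -> False).
  { intros x y Hx Hxy Ex Ey.
    destruct (Rle_lt_dec 0 ((1 - k) * a * x - k * b)) as [Hinc | Hdec].
    - pose proof (pow_affine_increasing 1 x ltac:(lra) Hx Hinc) as Hlt.
      rewrite pow_affine_1 in Hlt. lra.
    - pose proof (pow_affine_decreasing x y ltac:(lra) Hxy ltac:(lra)). lra. }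
  intros Hu Hv Eu Ev.
  destruct (Rtotal_order u v) as [H | [H | H]]; [exfalso | exact H | exfalso].
  - exact (Hroots u v Hu H Eu Ev).
  - exact (Hroots v u Hv H Ev Eu).
Qed.

End PowAffine.

Lemma exists_Rpower_quarter k : 1 < k -> exists V, 1 < V /\ V * Rpower V (- k) = / 4.
Proof.
  intros Hk. exists (Rpower 4 (/ (k - 1))). split.
  - rewrite <- (Rpower_O 4) at 1 by lra.
    apply Rpower_lt; [lra|]. apply Rinv_0_lt_compat. lra.
  - rewrite <- (Rpower_1 (Rpower 4 (/ (k - 1)))) at 1 by apply Rpower_pos.
    rewrite <- Rpower_plus, Rpower_mult.
    replace (/ (k - 1) * (1 + - k)) with (- (1)) by (field; lra).
    rewrite Rpower_Ropp, Rpower_1; lra.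
Qed.

Lemma exists_pow_affine_eq_1 k a b : 1 < k -> 0 <= a <= 2 -> Rabs b <= 1 -> 1 < a + b ->
  exists v, 1 < v /\ pow_affine k a b v = 1.
Proof.
  intros Hk Ha Hb Hab.
  destruct (exists_Rpower_quarter k Hk) as [V [HV EV]].
  assert (HphiV : pow_affine k a b V < 1).
  { unfold pow_affine. apply Rabs_le_between in Hb.
    assert (HP : 0 < Rpower V (- k)) by apply Rpower_pos.
    assert (Rpower V (- k) < / 4) by (rewrite <- EV; nra).
    nra. }
  destruct (IVT_interv (fun v => 1 - pow_affine k a b v) 1 V) as [v [Hv Ev]].
  - intros v Hv. apply continuity_pt_minus; [apply continuity_pt_const; intros ? ?; reflexivity|].
    apply derivable_continuous_pt. exists (Rpower v (- k) / v * ((1 - k) * a * v - k * b)).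
    apply is_derive_Reals, is_derive_pow_affine. lra.
  - exact HV.
  - rewrite pow_affine_1. lra.
  - lra.
  - exists v. destruct (Req_dec v 1) as [E | Hne].
    + rewrite E, pow_affine_1 in Ev. lra.
    + split; lra.
Qed.

Lemma Rpower_2 x : 0 < x -> Rpower x 2 = x * x.
Proof.
  intros Hx. replace 2 with (1 + 1) by ring.
  rewrite Rpower_plus, Rpower_1 by exact Hx. reflexivity.
Qed.

Lemma ln_third_Rpower r : ln (1 / 3 * Rpower (3 / 2) r) = r * (ln 3 - ln 2) - ln 3.
Proof.
  rewrite ln_mult, ln_Rpower by (try apply Rpower_pos; lra).
  unfold Rdiv. rewrite Rmult_1_l, ln_mult, !ln_Rinv by lra. ring.
Qed.

(* [k * (r - 1) = r] relates [k = beta / (beta - alpha)] to [r = beta / alpha]. *)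
Lemma common_point_value_iff S0 k r : 0 < S0 -> k * (r - 1) = r ->
  3 * S0 * Rpower (2 * S0) (- k) = 1 <-> S0 = 1 / 3 * Rpower (3 / 2) r.
Proof.
  intros HS0 Hkr.
  assert (Hr : r - 1 <> 0) by (intros E; rewrite E in Hkr; lra).
  assert (Hpos : 0 < 3 * S0 * Rpower (2 * S0) (- k))
    by (apply Rmult_lt_0_compat; [lra | apply Rpower_pos]).
  assert (Hln : ln (3 * S0 * Rpower (2 * S0) (- k)) = ln 3 + ln S0 - k * (ln 2 + ln S0)).
  { rewrite !ln_mult, ln_Rpower, ln_mult by (try apply Rpower_pos; nra). ring. }
  assert (Hlin : (ln 3 + ln S0 - k * (ln 2 + ln S0)) * (r - 1)
                 = r * (ln 3 - ln 2) - ln 3 - ln S0).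
  { transitivity ((ln 3 + ln S0) * (r - 1) - k * (r - 1) * (ln 2 + ln S0)); [ring|].
    rewrite Hkr. ring. }
  split; intros E.
  - apply ln_inv; [lra | apply Rmult_lt_0_compat; [lra | apply Rpower_pos] |].
    rewrite ln_third_Rpower. rewrite E, ln_1 in Hln. rewrite <- Hln, Rmult_0_l in Hlin. lra.
  - apply (f_equal ln) in E. rewrite ln_third_Rpower in E.
    apply ln_inv; [exact Hpos | lra |]. rewrite Hln, ln_1.
    apply (Rmult_eq_reg_r (r - 1)); [|exact Hr]. rewrite Hlin. lra.
Qed.

(** * The time change w(t) = S0 + I0 e^(ct) *)

Definition shifted_exp (S0 I0 c t : R) : R := S0 + I0 * exp (c * t).

Section ShiftedExp.

Variables S0 I0 c : R.
Hypotheses (HI0 : 0 < I0) (Hc : 0 < c).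

Local Notation w := (shifted_exp S0 I0 c).

Lemma is_derive_shifted_exp t : is_derive w t (c * (w t - S0)).
Proof. unfold shifted_exp. auto_derive; [exact I|]. ring. Qed.

Lemma shifted_exp_0 : w 0 = S0 + I0.
Proof. unfold shifted_exp. rewrite Rmult_0_r, exp_0. ring. Qed.

Lemma shifted_exp_gt t : S0 < w t.
Proof. unfold shifted_exp. pose proof (exp_pos (c * t)). nra. Qed.

Lemma shifted_exp_lt t1 t2 : t1 < t2 -> w t1 < w t2.
Proof.
  intros Ht. unfold shifted_exp. apply Rplus_lt_compat_l, Rmult_lt_compat_l; [exact HI0|].
  apply exp_increasing. nra.
Qed.

Lemma shifted_exp_lt_iff t1 t2 : w t1 < w t2 <-> t1 < t2.
Proof.
  split; [|apply shifted_exp_lt]. intros Hw.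
  destruct (Rlt_le_dec t1 t2) as [H | H]; [exact H|].
  destruct (Rle_lt_or_eq_dec _ _ H) as [H' | H'].
  - pose proof (shifted_exp_lt _ _ H'). lra.
  - subst. lra.
Qed.

Lemma shifted_exp_inj t1 t2 : w t1 = w t2 -> t1 = t2.
Proof.
  intros E. destruct (Rtotal_order t1 t2) as [H | [H | H]]; [| exact H |];
    apply shifted_exp_lt in H; lra.
Qed.

Lemma shifted_exp_surj v : S0 + I0 < v -> exists t, 0 < t /\ w t = v.
Proof.
  intros Hv. exists (ln ((v - S0) / I0) / c).
  assert (Hq : 0 < (v - S0) / I0) by (apply Rdiv_lt_0_compat; lra).
  assert (Hw : w (ln ((v - S0) / I0) / c) = v).
  { unfold shifted_exp.
    replace (c * (ln ((v - S0) / I0) / c)) with (ln ((v - S0) / I0)) by (field; lra).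
    rewrite exp_ln by exact Hq. field. lra. }
  split; [|exact Hw].
  apply shifted_exp_lt_iff. rewrite Hw, shifted_exp_0. exact Hv.
Qed.

Lemma meet_exactly_once_shifted_exp (f g : R -> R) (P : R -> Prop) :
  (forall t, 0 < t -> (f t = g t <-> P (w t))) ->
  (exists v, S0 + I0 < v /\ P v) ->
  (forall u v, S0 + I0 < u -> S0 + I0 < v -> P u -> P v -> u = v) ->
  meet_exactly_once f g.
Proof.
  intros Hfg [v [Hv HPv]] Huniq.
  destruct (shifted_exp_surj v Hv) as [t [Ht Hwt]].
  exists t. split.
  - split; [exact Ht|]. apply Hfg; [exact Ht|]. rewrite Hwt. exact HPv.
  - intros t' [Ht' E]. apply shifted_exp_inj.
    assert (Hw' : S0 + I0 < w t') by (rewrite <- shifted_exp_0; apply shifted_exp_lt, Ht').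
    rewrite Hwt. apply Huniq; [exact Hw' | exact Hv | apply Hfg; assumption | exact HPv].
Qed.

End ShiftedExp.

Section SIRSolution.

Variables (alpha beta S0 I0 : R) (S I Rm : R -> R).
Hypotheses (Halpha : 0 < alpha) (Hab : alpha < beta) (HI0 : 0 < I0) (HIS : I0 < S0)
  (Hsum : S0 + I0 = 1) (Hsol : SIR_solution alpha beta S0 I0 S I Rm).

Local Notation w := (shifted_exp S0 I0 (beta - alpha)).
Local Notation k := (beta / (beta - alpha)).

Let rate_pos : 0 < beta - alpha.
Proof. lra. Qed.

Section BeforeFirstZero.

Variable T : R.
Hypothesis Hpos : forall t, 0 < t < T -> 0 < S t /\ 0 < I t.

Lemma I_mul_S0_on t : 0 < t < T -> I t * S0 = (w t - S0) * S t.
Proof.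
  pose proof Hsol as (_ & _ & _ & HSlim & HIlim & _ & Hode).
  assert (Hinv : forall t, 0 < t < T ->
            ln (S t) - ln (I t) + (beta - alpha) * t = ln S0 - ln I0 + (beta - alpha) * 0).
  { apply is_derive_0_at_right_eq.
    - intros s Hs. destruct (Hpos s Hs) as [HSs HIs].
      destruct (Hode s (proj1 Hs)) as (HdS & HdI & _).
      eapply is_derive_eq_value.
      + apply is_derive_Rplus; [apply is_derive_Rminus | apply is_derive_linear];
          apply is_derive_ln_comp; eassumption.
      + field. lra.
    - apply filterlim_Rplus; [apply filterlim_Rminus; apply filterlim_ln; lra || assumption|].
      apply (continuous_at_right (fun s => (beta - alpha) * s)).
      eapply is_derive_continuous, is_derive_linear. }
  intros Ht. destruct (Hpos t Ht) as [HSt HIt].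
  assert (Hw : w t - S0 = I0 * exp ((beta - alpha) * t)) by (unfold shifted_exp; ring).
  assert (Hexp : 0 < exp ((beta - alpha) * t)) by apply exp_pos.
  rewrite Hw.
  apply ln_inv; [apply Rmult_lt_0_compat; lra | repeat apply Rmult_lt_0_compat; lra |].
  rewrite !ln_mult, ln_exp by (try apply Rmult_lt_0_compat; lra).
  pose proof (Hinv t Ht). lra.
Qed.

Lemma S_closed_form_on t : 0 < t < T -> S t = S0 * Rpower (w t) (- k).
Proof.
  pose proof Hsol as (_ & _ & _ & HSlim & _ & _ & Hode).
  assert (Hinv : forall t, 0 < t < T -> ln (S t) + k * ln (w t) = ln S0 + k * ln (w 0)).
  { apply is_derive_0_at_right_eq.
    - intros s Hs. destruct (Hpos s Hs) as [HSs HIs].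
      destruct (Hode s (proj1 Hs)) as (HdS & _).
      assert (Hw : S0 < w s) by (apply shifted_exp_gt; lra).
      eapply is_derive_eq_value.
      + apply is_derive_Rplus; [apply is_derive_ln_comp; eassumption|].
        apply (is_derive_scal (fun s => ln (w s))), is_derive_ln_comp; [lra|].
        apply is_derive_shifted_exp.
      + replace (I s) with ((w s - S0) * S s / S0)
          by (rewrite <- I_mul_S0_on by exact Hs; field; lra).
        field. repeat split; nra.
    - apply filterlim_Rplus; [apply filterlim_ln; lra || assumption|].
      apply (continuous_at_right (fun s => k * ln (w s))).
      eapply is_derive_continuous, (is_derive_scal (fun s => ln (w s))), is_derive_ln_comp;
        [|apply is_derive_shifted_exp].
      rewrite shifted_exp_0. lra. }
  intros Ht. destruct (Hpos t Ht) as [HSt _].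
  pose proof (Hinv t Ht) as E. rewrite shifted_exp_0, Hsum, ln_1 in E.
  rewrite <- (exp_ln (S t)) by exact HSt.
  replace (ln (S t)) with (ln S0 + - k * ln (w t)) by lra.
  rewrite exp_plus, exp_ln by lra. reflexivity.
Qed.

Lemma closed_form_on t : 0 < t < T ->
  S t = S0 * Rpower (w t) (- k) /\ I t = (w t - S0) * Rpower (w t) (- k).
Proof.
  intros Ht. pose proof (S_closed_form_on t Ht) as HSt. split; [exact HSt|].
  apply (Rmult_eq_reg_r S0); [|lra]. rewrite I_mul_S0_on, HSt by exact Ht. ring.
Qed.

End BeforeFirstZero.

Lemma solution_pos : forall t, 0 < t -> 0 < S t /\ 0 < I t.
Proof.
  pose proof Hsol as (_ & _ & _ & HSlim & HIlim & _ & Hode).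
  apply at_right_0_continuation.
  - apply filter_and; [apply (filterlim_pos_eventually _ _ S0 HSlim)
                      | apply (filterlim_pos_eventually _ _ I0 HIlim)]; lra.
  - intros m Hm Hpos.
    destruct (Hode m Hm) as (HdS & HdI & _).
    assert (Hw : S0 < w m) by (apply shifted_exp_gt; lra).
    assert (HP : 0 < Rpower (w m) (- k)) by apply Rpower_pos.
    assert (Hex : 0 < exp ((beta - alpha) * m)) by apply exp_pos.
    assert (HSm : S m = S0 * Rpower (w m) (- k)).
    { apply (continuous_eq_at_left S (fun t => S0 * Rpower (w t) (- k)) 0 m Hm).
      - exact (is_derive_continuous _ _ _ HdS).
      - apply (ex_derive_continuous (K := R_AbsRing) (V := R_NormedModule)).
        unfold shifted_exp, Rpower. auto_derive. nra.
      - intros t Ht. apply (closed_form_on m Hpos t Ht). }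
    assert (HIm : I m = (w m - S0) * Rpower (w m) (- k)).
    { apply (continuous_eq_at_left I (fun t => (w t - S0) * Rpower (w t) (- k)) 0 m Hm).
      - exact (is_derive_continuous _ _ _ HdI).
      - apply (ex_derive_continuous (K := R_AbsRing) (V := R_NormedModule)).
        unfold shifted_exp, Rpower. auto_derive. nra.
      - intros t Ht. apply (closed_form_on m Hpos t Ht). }
    apply filter_and.
    + apply (filterlim_pos_eventually _ _ _ (is_derive_continuous _ _ _ HdS)). rewrite HSm. nra.
    + apply (filterlim_pos_eventually _ _ _ (is_derive_continuous _ _ _ HdI)). rewrite HIm. nra.
Qed.

Lemma closed_form t : 0 <= t ->
  S t = S0 * Rpower (w t) (- k) /\ I t = (w t - S0) * Rpower (w t) (- k) /\
  Rm t = 1 - w t * Rpower (w t) (- k).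
Proof.
  pose proof Hsol as (HS0 & HI0' & HR0 & HSlim & HIlim & HRlim & Hode).
  intros Ht. destruct (Rle_lt_or_eq_dec 0 t Ht) as [Htpos | <-].
  - assert (Hpos : forall s, 0 < s < t + 1 -> 0 < S s /\ 0 < I s)
      by (intros s Hs; apply solution_pos; lra).
    destruct (closed_form_on (t + 1) Hpos t ltac:(lra)) as [HSt HIt].
    split; [exact HSt | split; [exact HIt|]].
    assert (Hcons : S t + I t + Rm t = S0 + I0 + 0).
    { apply (is_derive_0_at_right_eq (fun s => S s + I s + Rm s) (t + 1)); [| |lra].
      - intros s Hs. destruct (Hode s (proj1 Hs)) as (HdS & HdI & HdR).
        eapply is_derive_eq_value.
        + apply is_derive_Rplus; [apply is_derive_Rplus|]; eassumption.
        + ring.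
      - apply filterlim_Rplus; [apply filterlim_Rplus|]; assumption. }
    rewrite HSt, HIt in Hcons. lra.
  - rewrite HS0, HI0', HR0, shifted_exp_0, Hsum, Rpower_base_1. lra.
Qed.

Lemma S_eq_I_iff t : 0 <= t -> (S t = I t <-> w t = 2 * S0).
Proof.
  intros Ht. destruct (closed_form t Ht) as (-> & -> & _).
  pose proof (Rpower_pos (w t) (- k)). split; intros E; nra.
Qed.

Lemma S_eq_Rm_iff t : 0 <= t -> (S t = Rm t <-> pow_affine k 1 S0 (w t) = 1).
Proof.
  intros Ht. destruct (closed_form t Ht) as (-> & _ & ->).
  unfold pow_affine. split; intros E; lra.
Qed.

Lemma I_eq_Rm_iff t : 0 <= t -> (I t = Rm t <-> pow_affine k 2 (- S0) (w t) = 1).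
Proof.
  intros Ht. destruct (closed_form t Ht) as (_ & -> & ->).
  unfold pow_affine. split; intros E; lra.
Qed.

Lemma I_eq_pow_affine t : 0 <= t -> I t = pow_affine k 1 (- S0) (w t).
Proof. intros Ht. destruct (closed_form t Ht) as (_ & -> & _). unfold pow_affine. ring. Qed.

Lemma k_gt_1 : 1 < k.
Proof. apply (Rmult_lt_reg_r (beta - alpha)); [lra|]. field_simplify; lra. Qed.

Lemma meet_S_I : meet_exactly_once S I.
Proof.
  apply (meet_exactly_once_shifted_exp S0 I0 _ HI0 rate_pos _ _
           (fun v => v = 2 * S0)).
  - intros t Ht. apply S_eq_I_iff. lra.
  - exists (2 * S0). lra.
  - intros u v _ _ -> ->. reflexivity.
Qed.

Lemma meet_S_Rm : meet_exactly_once S Rm.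
Proof.
  apply (meet_exactly_once_shifted_exp S0 I0 _ HI0 rate_pos _ _
           (fun v => pow_affine k 1 S0 v = 1)).
  - intros t Ht. apply S_eq_Rm_iff. lra.
  - rewrite Hsum. apply exists_pow_affine_eq_1; [apply k_gt_1 | lra | apply Rabs_le; lra | lra].
  - rewrite Hsum. intros u v. apply pow_affine_eq_1_unique; [apply k_gt_1 | lra | lra].
Qed.

Lemma meet_I_Rm : meet_exactly_once I Rm.
Proof.
  apply (meet_exactly_once_shifted_exp S0 I0 _ HI0 rate_pos _ _
           (fun v => pow_affine k 2 (- S0) v = 1)).
  - intros t Ht. apply I_eq_Rm_iff. lra.
  - rewrite Hsum. apply exists_pow_affine_eq_1; [apply k_gt_1 | lra | apply Rabs_le; lra | lra].
  - rewrite Hsum. intros u v. apply pow_affine_eq_1_unique; [apply k_gt_1 | lra | lra].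
Qed.

Hypothesis Hthreshold : alpha / beta < S0.

Lemma peak_level_gt_1 : 1 < beta * S0 / alpha.
Proof.
  apply (Rmult_lt_reg_r (alpha / beta)); [apply Rdiv_lt_0_compat; lra|].
  replace (beta * S0 / alpha * (alpha / beta)) with S0 by (field; lra). lra.
Qed.

Lemma is_peak_time_iff tp : is_peak_time I tp <-> alpha * w tp = beta * S0.
Proof.
  pose proof peak_level_gt_1 as Hm. set (m := beta * S0 / alpha) in Hm |- *.
  assert (Hlt_max : forall t, 0 <= t -> w t <> m -> I t < pow_affine k 1 (- S0) m).
  { intros t Ht Hne. rewrite I_eq_pow_affine by exact Ht.
    apply (pow_affine_lt_max k 1 (- S0) k_gt_1 Rlt_0_1); [lra | | | exact Hne].
    - unfold m. field. lra.
    - pose proof (shifted_exp_gt S0 I0 (beta - alpha) HI0 t). lra. }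
  assert (Hm_iff : alpha * w tp = beta * S0 <-> w tp = m)
    by (unfold m; split; intros E; [rewrite <- E | rewrite E]; field; lra).
  rewrite Hm_iff. split.
  - intros [Htp Hmax]. apply NNPP. intros Hne.
    destruct (shifted_exp_surj S0 I0 _ HI0 rate_pos m ltac:(lra)) as [t [Ht Hwt]].
    pose proof (Hlt_max tp ltac:(lra) Hne) as Hlt. pose proof (Hmax t ltac:(lra)) as Hle.
    rewrite I_eq_pow_affine, Hwt in Hle by lra. lra.
  - intros Hwtp.
    assert (Htp : 0 < tp).
    { apply (shifted_exp_lt_iff S0 I0 _ HI0 rate_pos).
      rewrite shifted_exp_0, Hwtp. lra. }
    split; [exact Htp|]. intros t Ht.
    rewrite (I_eq_pow_affine tp), Hwtp by lra.
    destruct (Req_dec (w t) m) as [E | Hne].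
    + rewrite I_eq_pow_affine, E by exact Ht. lra.
    + left. exact (Hlt_max t Ht Hne).
Qed.

Lemma common_point_iff t : 0 <= t ->
  (S t = I t /\ I t = Rm t) <-> (w t = 2 * S0 /\ S0 = 1 / 3 * Rpower (3 / 2) (beta / alpha)).
Proof.
  intros Ht. rewrite S_eq_I_iff, I_eq_Rm_iff by exact Ht.
  rewrite <- (common_point_value_iff S0 k (beta / alpha)); [| lra | field; lra].
  unfold pow_affine. split; intros [Hw E]; rewrite Hw in *; split; try reflexivity; lra.
Qed.

Lemma peak_time_exists_unique :
  exists tp, is_peak_time I tp /\ forall t, is_peak_time I t -> t = tp.
Proof.
  pose proof peak_level_gt_1 as Hm. rewrite <- Hsum in Hm.
  destruct (shifted_exp_surj S0 I0 _ HI0 rate_pos _ Hm) as [tp [_ Hwtp]].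
  exists tp. rewrite is_peak_time_iff, Hwtp. split; [field; lra|].
  intros t Ht. apply is_peak_time_iff in Ht.
  apply (shifted_exp_inj S0 I0 _ HI0 rate_pos).
  rewrite Hwtp. apply (Rmult_eq_reg_l alpha); [|lra]. rewrite Ht. field. lra.
Qed.

Lemma S_I_meet_vs_peak tp ts : is_peak_time I tp -> 0 < ts -> S ts = I ts ->
  (2 * alpha < beta -> ts < tp) /\ (beta = 2 * alpha -> ts = tp) /\
  (beta < 2 * alpha -> tp < ts).
Proof.
  intros Htp Hts E.
  apply is_peak_time_iff in Htp. apply S_eq_I_iff in E; [|lra].
  assert (HS0 : 0 < S0) by lra.
  split; [|split]; intros Hb.
  - apply (shifted_exp_lt_iff S0 I0 _ HI0 rate_pos).
    apply (Rmult_lt_reg_l alpha); [exact Halpha|]. rewrite Htp, E.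
    assert (0 < (beta - 2 * alpha) * S0) by (apply Rmult_lt_0_compat; lra). lra.
  - apply (shifted_exp_inj S0 I0 _ HI0 rate_pos).
    apply (Rmult_eq_reg_l alpha); [|lra]. rewrite Htp, E, Hb. ring.
  - apply (shifted_exp_lt_iff S0 I0 _ HI0 rate_pos).
    apply (Rmult_lt_reg_l alpha); [exact Halpha|]. rewrite Htp, E.
    assert (0 < (2 * alpha - beta) * S0) by (apply Rmult_lt_0_compat; lra). lra.
Qed.

Lemma common_point_exists_iff :
  (exists t, 0 < t /\ S t = I t /\ I t = Rm t) <->
  (beta / alpha < ln 3 / (ln 3 - ln 2) /\ S0 = 1 / 3 * Rpower (3 / 2) (beta / alpha)).
Proof.
  assert (Hln : ln 2 < ln 3) by (apply ln_increasing; lra).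
  split.
  - intros [t [Ht Hcommon]]. apply common_point_iff in Hcommon as [_ E]; [|lra].
    split; [|exact E].
    assert (Hneg : ln S0 < 0) by (rewrite <- ln_1; apply ln_increasing; lra).
    rewrite E, ln_third_Rpower in Hneg.
    apply (Rmult_lt_reg_r (ln 3 - ln 2)); [lra|].
    replace (ln 3 / (ln 3 - ln 2) * (ln 3 - ln 2)) with (ln 3) by (field; lra). lra.
  - intros [_ E].
    destruct (shifted_exp_surj S0 I0 _ HI0 rate_pos (2 * S0) ltac:(lra))
      as [t [Ht Hwt]].
    exists t. split; [exact Ht|]. apply common_point_iff; [lra|]. split; assumption.
Qed.

Lemma common_point_at_peak_iff tp : is_peak_time I tp ->
  (S tp = I tp /\ I tp = Rm tp) <-> (beta = 2 * alpha /\ S0 = 3 / 4).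
Proof.
  intros Htp. assert (Htp0 : 0 <= tp) by (destruct Htp; lra).
  apply is_peak_time_iff in Htp.
  rewrite common_point_iff by exact Htp0.
  assert (Hw : w tp = 2 * S0 <-> beta = 2 * alpha).
  { split; intros E.
    - rewrite E in Htp. apply (Rmult_eq_reg_r S0); lra.
    - apply (Rmult_eq_reg_l alpha); [rewrite Htp, E; ring | lra]. }
  rewrite Hw. split; intros [Hb E]; split; try exact Hb;
    replace (beta / alpha) with 2 in * by (rewrite Hb; field; lra);
    rewrite Rpower_2 in * by lra; lra.
Qed.

End SIRSolution.

Theorem proposition2 (alpha beta S0 I0 : R) (S I Rm : R -> R) :
  0 < alpha -> 0 < beta -> alpha < beta ->
  0 < I0 -> I0 < S0 -> S0 + I0 = 1 -> alpha / beta < S0 ->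
  SIR_solution alpha beta S0 I0 S I Rm ->
  meet_exactly_once S I /\ meet_exactly_once S Rm /\ meet_exactly_once I Rm /\
  (exists tp, is_peak_time I tp /\
     forall t, is_peak_time I t -> t = tp) /\
  (forall tp ts, is_peak_time I tp -> 0 < ts -> S ts = I ts ->
     (2 * alpha < beta -> ts < tp) /\
     (beta = 2 * alpha -> ts = tp) /\
     (beta < 2 * alpha -> tp < ts)) /\
  ((exists t, 0 < t /\ S t = I t /\ I t = Rm t) <->
     (beta / alpha < ln 3 / (ln 3 - ln 2) /\
      S0 = 1 / 3 * Rpower (3 / 2) (beta / alpha))) /\
  (forall tp, is_peak_time I tp ->
     ((S tp = I tp /\ I tp = Rm tp) <-> (beta = 2 * alpha /\ S0 = 3 / 4))).
Proof.
  intros Halpha _ Hab HI0 HIS Hsum Hthreshold Hsol.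
  split; [apply (meet_S_I alpha beta S0 I0 S I Rm); assumption|].
  split; [apply (meet_S_Rm alpha beta S0 I0 S I Rm); assumption|].
  split; [apply (meet_I_Rm alpha beta S0 I0 S I Rm); assumption|].
  split; [apply (peak_time_exists_unique alpha beta S0 I0 S I Rm); assumption|].
  split; [intros tp ts; apply (S_I_meet_vs_peak alpha beta S0 I0 S I Rm); assumption|].
  split; [apply (common_point_exists_iff alpha beta S0 I0 S I Rm); assumption|].
  intros tp; apply (common_point_at_peak_iff alpha beta S0 I0 S I Rm); assumption.
Qed.
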